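(* Let $f:\mathbb{F}_2^{\,n}\to\mathbb{R}$, let $s\ge 1$ and $d$ be integers, and let $H\le\mathbb{F}_2^{\,n}$ be a subspace of codimension $d$ drawn uniformly at random. Consider the $2^d$ cosets (buckets) of $H$, with bucket energies indexed so that $y_1\ge y_2\ge\dots\ge y_{2^d}$, and for each bucket $i$ let $y_i^*$ be the energy of the largest Fourier coefficient in that bucket, and $z_i=y_i-y_i^*$. Then $$\mathbb{E}_H\left[\sum_{i=1}^s z_i\right]\le\sqrt{\frac{2s}{2^d}}\,\|f\|_2^2.$$
   Context: $\hat f(\alpha)=\frac{1}{2^n}\sum_x f(x)(-1)^{\alpha\cdot x}$ and $\|f\|_2^2=\frac{1}{2^n}\sum_x f(x)^2=\sum_\alpha\hat f(\alpha)^2$. The energy of a Fourier coefficient is $\hat f(\alpha)^2$. For a coset $C=a+H$ of $H$, its energy is $y=\sum_{\beta\in C}\hat f(\beta)^2$ and $y^*=\max_{\beta\in C}\hat f(\beta)^2$. *)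

From mathcomp Require Import all_boot all_order all_algebra.
Set Implicit Arguments. Unset Strict Implicit. Unset Printing Implicit Defensive.
Import Order.TTheory GRing.Theory Num.Theory.
Local Open Scope ring_scope.

Section Fourier.
Variables (R : rcfType) (n : nat).
Notation V := 'rV['F_2]_n.

Definition dotF2 (alpha x : V) : 'F_2 := \sum_(i < n) alpha 0 i * x 0 i.

Definition chi (alpha x : V) : R := (-1) ^+ (nat_of_ord (dotF2 alpha x)).

Definition fhat (f : V -> R) (alpha : V) : R :=
  (2%:R ^+ n)^-1 * \sum_(x : V) f x * chi alpha x.

Definition norm2sq (f : V -> R) : R := (2%:R ^+ n)^-1 * \sum_(x : V) f x ^+ 2.

(* subspace of codimension d: dimension n - d, i.e. 2^(n-d) elements *)
Definition codim_subspace (d : nat) (H : {set V}) : bool :=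
  [&& 0 \in H, [forall c : 'F_2, forall u : V, forall v : V,
        (u \in H) ==> (v \in H) ==> (c *: u + v \in H)]
    & #|H| == (2 ^ (n - d))%N].

Definition coset (H : {set V}) (a : V) : {set V} := [set a + h | h in H].
Definition cosets (H : {set V}) : {set {set V}} := [set coset H a | a : V].

Definition energy (f : V -> R) (C : {set V}) : R := \sum_(b in C) fhat f b ^+ 2.
(* y^* = max_{beta in C} fhat(beta)^2 (energies are >= 0, so 0 is a neutral default) *)
Definition max_energy (f : V -> R) (C : {set V}) : R :=
  \big[Order.max/0]_(b in C) fhat f b ^+ 2.
Definition zval (f : V -> R) (C : {set V}) : R := energy f C - max_energy f C.

Definition expect_codim (d : nat) (X : {set V} -> R) : R :=
  (#|[set H : {set V} | codim_subspace d H]|%:R)^-1 *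
  \sum_(H : {set V} | codim_subspace d H) X H.

End Fourier.

From mathcomp Require Import all_boot all_order all_algebra lra zify.
Import Order.TTheory GRing.Theory Num.Theory.
Set Implicit Arguments. Unset Strict Implicit. Unset Printing Implicit Defensive.
Local Open Scope ring_scope.

(* Within a bucket C with energy y and top energy y^*, the products of the
   energies of distinct pairs of coefficients of C add up to
   y^2 - sum \hat f^4 >= y^2 - y^* y >= (y - y^* )^2.  Cauchy-Schwarz over the
   s chosen buckets therefore bounds sum_i z_i by sqrt (s Q_H), where Q_H sums
   \hat f(b)^2 \hat f(b')^2 over the pairs b <> b' with b - b' in H, and
   Jensen moves the expectation inside the square root.  Since GL_n(F_2) acts
   transitively on nonzero vectors and preserves codimension, a nonzero vector
   lies in a uniformly random codimension-d subspace with probability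
   (2^(n-d) - 1)/(2^n - 1) <= 2^-d, so by Parseval E Q_H <= 2^-d ||f||_2^4.
   This yields the bound even without the factor 2. *)

Lemma F2_cases (c : 'F_2) : c = 0 \/ c = 1.
Proof. by case: c => [[|[|k]] Hk]; [left|right|]; try exact: val_inj. Qed.

Lemma F2_pchar2 : 2 \in [pchar 'F_2].
Proof. exact: pchar_Fp. Qed.

Lemma signF2D (R : pzRingType) (a b : 'F_2) :
  (-1) ^+ (a + b)%R = (-1) ^+ a * (-1) ^+ b :> R.
Proof.
case: (F2_cases a) => ->; case: (F2_cases b) => -> /=.
all: by rewrite ?expr0 ?expr1 ?mulrNN ?mul1r ?mulr1.
Qed.

Lemma F2mx_oppr m k (A : 'M['F_2]_(m, k)) : - A = A.
Proof. by apply/matrixP => i j; rewrite mxE (oppr_pchar2 F2_pchar2). Qed.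

Lemma F2mx_addrr m k (A : 'M['F_2]_(m, k)) : A + A = 0.
Proof. by rewrite -{2}[A]F2mx_oppr subrr. Qed.

Lemma F2mx_addr_eq0 m k (A B : 'M['F_2]_(m, k)) : (A + B == 0) = (A == B).
Proof. by rewrite -[RHS]subr_eq0 F2mx_oppr. Qed.

Section Characters.
Variables (R : rcfType) (n : nat).
Notation V := 'rV['F_2]_n.

Lemma dotF2C (a x : V) : dotF2 a x = dotF2 x a.
Proof. by apply: eq_bigr => i _; rewrite mulrC. Qed.

Lemma dotF2Dr (a x y : V) : dotF2 a (x + y) = dotF2 a x + dotF2 a y.
Proof. by rewrite /dotF2 -big_split; apply: eq_bigr => i _; rewrite !mxE mulrDr. Qed.

Lemma dotF2Dl (a b x : V) : dotF2 (a + b) x = dotF2 a x + dotF2 b x.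
Proof. by rewrite dotF2C dotF2Dr !(dotF2C x). Qed.

Lemma dotF2Zr (a x : V) c : dotF2 a (c *: x) = c * dotF2 a x.
Proof. by rewrite /dotF2 mulr_sumr; apply: eq_bigr => i _; rewrite !mxE mulrCA. Qed.

Lemma dotF2_delta (i : 'I_n) (x : V) : dotF2 (delta_mx 0 i) x = x 0 i.
Proof.
rewrite /dotF2 (bigD1 i) //= big1 ?addr0; first by rewrite mxE !eqxx mul1r.
by move=> j /negbTE ji; rewrite mxE ji andbF mul0r.
Qed.

Lemma rVF2_neq0 (x : V) : x != 0 -> exists i, x 0 i = 1.
Proof.
move=> x0; have [i xi] : exists i, x 0 i != 0.
  apply/existsP; apply: contraR x0 => /existsPn x0.
  by apply/eqP/matrixP => a j; rewrite (ord1 a) mxE; apply/eqP/negPn/x0.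
by exists i; case: (F2_cases (x 0 i)) xi => // ->; rewrite eqxx.
Qed.

Lemma chiC (a x : V) : chi R a x = chi R x a.
Proof. by rewrite /chi dotF2C. Qed.

Lemma chiDr (a x y : V) : chi R a (x + y) = chi R a x * chi R a y.
Proof. by rewrite /chi dotF2Dr signF2D. Qed.

Lemma sum_chi (x : V) : \sum_(a : V) chi R a x = (x == 0)%:R * 2%:R ^+ n.
Proof.
have [->|x0] := eqVneq x 0.
  rewrite (eq_bigr (fun=> 1)) => [|a _]; last first.
    by rewrite /chi /dotF2 big1 // => i _; rewrite mxE mulr0.
  by rewrite sumr_const card_mx card_Fp // mul1n mul1r natrX.
have [i xi] := rVF2_neq0 x0.
set S := \sum_a _; suff : S = - S by rewrite mul0r; lra.
rewrite {1}/S (reindex_inj (addrI (delta_mx 0 i))) -mulN1r mulr_sumr /=.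
by apply: eq_bigr => a _; rewrite !(chiC _ x) chiDr /chi dotF2C dotF2_delta xi.
Qed.

Lemma parseval (f : V -> R) : \sum_(b : V) fhat f b ^+ 2 = norm2sq f.
Proof.
rewrite /fhat /norm2sq.
have expK : 2%:R ^+ n * (2%:R ^+ n)^-1 = 1 :> R.
  by rewrite mulfV // expf_neq0 // pnatr_eq0.
under eq_bigr => b _ do
  rewrite exprMn [X in _ * X]expr2 big_distrlr /=.
under eq_bigr => b _ do under eq_bigr => x _ do under eq_bigr => y _ do
  rewrite mulrACA -chiDr.
rewrite -mulr_sumr exchange_big /=.
under eq_bigr => x _ do rewrite exchange_big /=.
under eq_bigr => x _ do under eq_bigr => y _ do
  rewrite -mulr_sumr sum_chi F2mx_addr_eq0.
rewrite !mulr_sumr; apply: eq_bigr => x _.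
rewrite (bigD1 x) //= eqxx big1 ?addr0 => [|y yx]; last first.
  by rewrite eq_sym (negbTE yx) mul0r mulr0.
rewrite mul1r expr2 -mulrA; congr (_ * _).
by rewrite mulrC -mulrA expK mulr1 expr2.
Qed.

End Characters.

Lemma sum_sqrt_le (R : rcfType) (I : finType) (P : pred I) (p : I -> R) :
  (forall i, P i -> 0 <= p i) ->
  \sum_(i | P i) Num.sqrt (p i) <= Num.sqrt (#|P|%:R * \sum_(i | P i) p i).
Proof.
move=> p_ge0; set L := \sum_(i | P i) _.
have L_ge0 : 0 <= L by apply: sumr_ge0 => i _; exact: sqrtr_ge0.
rewrite -(ger0_norm L_ge0) -sqrtr_sqr ler_sqrt; last first.
  by rewrite mulr_ge0 ?ler0n ?sumr_ge0.
have sum_const (c : R) : \sum_(j | P j) c = c * #|P|%:R.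
  by rewrite mulr_natr -sumr_const; apply: eq_bigl.
(* AM-GM: 2 sqrt(p i) sqrt(p j) <= p i + p j, summed over all pairs *)
have : 2 * L ^+ 2 <= \sum_(i | P i) \sum_(j | P j) (p i + p j).
  rewrite expr2 /L big_distrlr /= mulr_sumr; apply: ler_sum => i Pi.
  rewrite mulr_sumr; apply: ler_sum => j Pj.
  rewrite -{2}(sqr_sqrtr (p_ge0 i Pi)) -{2}(sqr_sqrtr (p_ge0 j Pj)).
  by have := sqr_ge0 (Num.sqrt (p i) - Num.sqrt (p j)); rewrite sqrrB; lra.
under eq_bigr => i _ do rewrite big_split /= sum_const.
by rewrite big_split /= -mulr_suml sum_const; lra.
Qed.

Section RealSums.
Variable R : realFieldType.

Lemma bigmax_le_sum (I : finType) (A : pred I) (a : I -> R) :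
  (forall i, A i -> 0 <= a i) ->
  \big[Order.max/0]_(i | A i) a i <= \sum_(i | A i) a i.
Proof.
move=> a_ge0; apply: bigmax_le => [|i Ai]; first exact: sumr_ge0.
by rewrite (bigD1 i) //= lerDl sumr_ge0 // => j /andP[/a_ge0].
Qed.

Lemma sqr_sum_sub_bigmax_le (I : finType) (A : pred I) (a : I -> R) :
  (forall i, A i -> 0 <= a i) ->
  (\sum_(i | A i) a i - \big[Order.max/0]_(i | A i) a i) ^+ 2 <=
  \sum_(i | A i) \sum_(j | A j && (j != i)) a i * a j.
Proof.
move=> a_ge0; set y := \sum_(i | A i) a i; set m := \big[Order.max/0]_(i | A i) a i.
have m_ge0 : 0 <= m := bigmax_ge_id _ _ _ _.
have my : m <= y := bigmax_le_sum a_ge0.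
have sum_sqr_le : \sum_(i | A i) a i * a i <= m * y.
  rewrite /y mulr_sumr; apply: ler_sum => i Ai.
  by rewrite ler_wpM2r ?a_ge0 // le_bigmax_cond.
have -> : \sum_(i | A i) \sum_(j | A j && (j != i)) a i * a j =
          y * y - \sum_(i | A i) a i * a i.
  rewrite mulr_suml -sumrB; apply: eq_bigr => i Ai.
  by rewrite /y mulr_sumr [in RHS](bigD1 i) //= addrC addrK.
nra.
Qed.

Lemma sum_nth_le_sum (T : Type) (x0 : T) (g : T -> R) (l : seq T) (s : nat) :
  g x0 = 0 -> (forall x, 0 <= g x) ->
  \sum_(i < s) g (nth x0 l i) <= \sum_(x <- l) g x.
Proof.
move=> gx0 g_ge0; elim: l s => [|x l IHl] [|s].
- by rewrite big_ord0 big_nil.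
- by rewrite big_nil big1 // => i _; rewrite nth_nil gx0.
- by rewrite big_ord0 sumr_ge0.
- by rewrite big_ord_recl big_cons lerD.
Qed.

End RealSums.

Section Subspaces.
Variables (n d : nat).
Notation V := 'rV['F_2]_n.

Lemma mem_coset (H : {set V}) a b : (b \in coset H a) = (b - a \in H).
Proof.
apply/imsetP/idP => [[h hH ->]|bH]; first by rewrite addrC addKr.
by exists (b - a) => //; rewrite addrC subrK.
Qed.

Section OneSubspace.
Variable H : {set V}.
Hypothesis codimH : codim_subspace d H.

Lemma subspace0 : 0 \in H.
Proof. by case/and3P: codimH. Qed.

Lemma subspaceZD c u v : u \in H -> v \in H -> c *: u + v \in H.
Proof.
case/and3P: codimH => _ /forallP/(_ c)/forallP/(_ u)/forallP/(_ v) + _ uH vH.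
by rewrite uH vH.
Qed.

Lemma subspaceD u v : u \in H -> v \in H -> u + v \in H.
Proof. by move=> uH vH; rewrite -[u]scale1r subspaceZD. Qed.

Lemma subspaceB u v : u \in H -> v \in H -> u - v \in H.
Proof. by rewrite F2mx_oppr; apply: subspaceD. Qed.

Lemma cosets_mem a C : (C \in cosets H) && (a \in C) = (C == coset H a).
Proof.
apply/andP/eqP => [[/imsetP[b _ ->] aC]|->]; last first.
  by rewrite imset_f // mem_coset subrr subspace0.
rewrite mem_coset in aC; apply/setP => x; rewrite !mem_coset.
apply/idP/idP => xH.
  have -> : x - a = (x - b) - (a - b) by rewrite opprB addrA subrK.
  by rewrite subspaceB.
have -> : x - b = (x - a) + (a - b) by rewrite addrA subrK.
by rewrite subspaceD.
Qed.

End OneSubspace.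
End Subspaces.

Section Transitivity.
Variables (n d : nat).
Notation V := 'rV['F_2]_n.

Lemma codim_subspace_linear_image (phi : V -> V) (H : {set V}) :
  linear phi -> injective phi -> codim_subspace d H ->
  codim_subspace d (phi @: H).
Proof.
move=> phi_lin phi_inj codimH.
have phi0 : phi 0 = 0.
  have := phi_lin 1 0 0; rewrite !scale1r !addr0 => /esym/eqP.
  by rewrite -subr_eq0 addrK => /eqP.
apply/and3P; split.
- by rewrite -phi0 imset_f // (subspace0 codimH).
- apply/forallP => c; apply/forallP => x; apply/forallP => y.
  apply/implyP => /imsetP[u uH ->]; apply/implyP => /imsetP[v vH ->].
  by rewrite -phi_lin imset_f // (subspaceZD codimH).
- by rewrite card_imset //; case/and3P: codimH.
Qed.

Lemma exists_dotF2_eq1 (v w : V) : v != 0 -> w != 0 ->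
  exists a : V, dotF2 a v = 1 /\ dotF2 a w = 1.
Proof.
move=> /rVF2_neq0[i vi] /rVF2_neq0[j wj].
case: (F2_cases (w 0 i)) => wi; last by exists (delta_mx 0 i); rewrite !dotF2_delta.
case: (F2_cases (v 0 j)) => vj; last by exists (delta_mx 0 j); rewrite !dotF2_delta.
exists (delta_mx 0 i + delta_mx 0 j).
by rewrite !dotF2Dl !dotF2_delta vi wj vj wi addr0 add0r.
Qed.

Lemma linear_injective_transitive (v w : V) : v != 0 -> w != 0 ->
  exists phi : V -> V, [/\ linear phi, injective phi & phi v = w].
Proof.
move=> v0 w0; have [a [av aw]] := exists_dotF2_eq1 v0 w0.
set u := v + w.
have au : dotF2 a u = 0 by rewrite dotF2Dr av aw (addrr_pchar2 F2_pchar2).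
(* a transvection, an involution because a . u = 0 *)
pose phi x := x + dotF2 a x *: u.
exists phi; split.
- move=> c x y; rewrite /phi.
  by rewrite dotF2Dr dotF2Zr scalerDl [c *: (x + _)]scalerDr scalerA addrACA.
- apply: (can_inj (g := phi)) => x.
  by rewrite /phi dotF2Dr dotF2Zr au mulr0 addr0 -addrA F2mx_addrr addr0.
- by rewrite /phi av scale1r addrA F2mx_addrr add0r.
Qed.

Definition subspaces_through (v : V) : {set {set V}} :=
  [set H | codim_subspace d H & v \in H].

Lemma card_subspaces_through_le (v w : V) : v != 0 -> w != 0 ->
  (#|subspaces_through v| <= #|subspaces_through w|)%N.
Proof.
move=> v0 w0; have [phi [phi_lin phi_inj phi_v]] := linear_injective_transitive v0 w0.
rewrite -(card_imset _ (imset_inj phi_inj)); apply/subset_leq_card/subsetP.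
move=> K /imsetP[H + ->]; rewrite inE => /andP[codimH vH].
by rewrite inE codim_subspace_linear_image //= -phi_v imset_f.
Qed.

Lemma sum_card_subspaces_through :
  (\sum_(v : V | v != 0%R) #|subspaces_through v| =
   #|[set H : {set V} | codim_subspace d H]| * (2 ^ (n - d)).-1)%N.
Proof.
under eq_bigr => v _ do rewrite -sum1dep_card.
rewrite (exchange_big_dep (codim_subspace d)) /=; last by move=> v H _ /andP[].
rewrite -sum_nat_const; apply: eq_big => [H|H codimH]; first by rewrite inE.
rewrite (eq_bigl (fun v => v \in H :\ 0)) => [|v]; last by rewrite !inE codimH.
rewrite sum1_card; have := cardsD1 0 H.
by rewrite (subspace0 codimH); case/and3P: codimH => _ _ /eqP -> ->.
Qed.

Lemma card_subspaces_through_bound (v : V) : (d <= n)%N -> v != 0 ->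
  (#|subspaces_through v| * 2 ^ d <= #|[set H : {set V} | codim_subspace d H]|)%N.
Proof.
move=> dn v0.
have le_sum : (#|subspaces_through v| * (2 ^ n).-1 <=
               \sum_(w : V | w != 0%R) #|subspaces_through w|)%N.
  have card_nz : #|predC1 (0 : V)| = (2 ^ n).-1 by rewrite cardC1 card_mx card_Fp // mul1n.
  rewrite -card_nz mulnC -sum_nat_const.
  by apply: leq_sum => w w0; apply: card_subspaces_through_le.
have le_all : (#|subspaces_through v| <= #|[set H : {set V} | codim_subspace d H]|)%N.
  by apply/subset_leq_card/subsetP => H; rewrite !inE => /andP[].
rewrite sum_card_subspaces_through -[in (2 ^ n)%N](subnK dn) expnD in le_sum.
have := expn_gt0 2 (n - d); have := expn_gt0 2 d.
move: le_sum le_all; rewrite -!subn1.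
(* c (A B - 1) <= N (A - 1) and c <= N give A (c B - N) <= c - N <= 0 *)
move: (2 ^ (n - d))%N (2 ^ d)%N #|_| #|_| => A B c N; nia.
Qed.

End Transitivity.

Section Expectation.
Variables (R : rcfType) (n d : nat).
Notation V := 'rV['F_2]_n.
Notation E := (@expect_codim R n d).

Lemma ler_expect_codim (X Y : {set V} -> R) :
  (forall H, codim_subspace d H -> X H <= Y H) -> E X <= E Y.
Proof. by move=> XY; rewrite ler_wpM2l ?invr_ge0 ?ler0n ?ler_sum. Qed.

Lemma expect_codimZ (c : R) (X : {set V} -> R) :
  E (fun H => c * X H) = c * E X.
Proof. by rewrite /expect_codim -mulr_sumr mulrCA. Qed.

Lemma expect_codim_sum (I : finType) (P : pred I) (X : I -> {set V} -> R) :
  E (fun H => \sum_(i | P i) X i H) = \sum_(i | P i) E (X i).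
Proof. by rewrite /expect_codim exchange_big mulr_sumr. Qed.

Lemma expect_codim_sqrt_le (X : {set V} -> R) :
  (forall H, codim_subspace d H -> 0 <= X H) ->
  E (fun H => Num.sqrt (X H)) <= Num.sqrt (E X).
Proof.
move=> X_ge0; rewrite /expect_codim.
have -> : #|[set H : {set V} | codim_subspace d H]| = #|@codim_subspace n d|.
  by apply: eq_card => H; rewrite inE.
apply: le_trans (ler_wpM2l _ (sum_sqrt_le X_ge0)) _; first by rewrite invr_ge0 ler0n.
set N := #|_|; set S := \sum_(H | _) X H.
have [->|N0] := posnP N; first by rewrite invr0 !mul0r sqrtr_ge0.
have -> : N%:R^-1 * S = N%:R^-1 ^+ 2 * (N%:R * S).
  by rewrite expr2 -mulrA mulKf // pnatr_eq0 -lt0n.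
by rewrite [in X in _ <= X]sqrtrM ?sqr_ge0 // sqrtr_sqr ger0_norm ?invr_ge0 ?ler0n.
Qed.

Lemma expect_codim_mem_le (v : V) : (d <= n)%N -> v != 0 ->
  E (fun H => (v \in H)%:R) <= (2%:R ^+ d)^-1.
Proof.
move=> dn v0; rewrite /expect_codim -natr_sum.
rewrite -big_mkcondr /= sum1dep_card.
have := card_subspaces_through_bound dn v0; rewrite -(ler_nat R) natrM natrX.
rewrite /subspaces_through; set N := #|[set H : {set V} | codim_subspace d H]|.
have [->|N0] := posnP N; first by rewrite invr0 mul0r invr_ge0 exprn_ge0.
by rewrite ler_pdivrMl ?ltr0n // ler_pdivlMr // exprn_gt0.
Qed.

End Expectation.

Section Buckets.
Variables (R : rcfType) (n : nat) (f : 'rV['F_2]_n -> R).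
Notation V := 'rV['F_2]_n.

Definition cross_energy (C : {set V}) : R :=
  \sum_(b in C) \sum_(b' in C | b' != b) fhat f b ^+ 2 * fhat f b' ^+ 2.

Definition coset_cross_energy (H : {set V}) : R :=
  \sum_(C in cosets H) cross_energy C.

Lemma cross_energy_ge0 C : 0 <= cross_energy C.
Proof. by do 2!apply: sumr_ge0 => ? _; rewrite mulr_ge0 ?sqr_ge0. Qed.

Lemma coset_cross_energy_ge0 H : 0 <= coset_cross_energy H.
Proof. by apply: sumr_ge0 => C _; exact: cross_energy_ge0. Qed.

Lemma cross_energy0 : cross_energy set0 = 0.
Proof. by rewrite /cross_energy big_pred0 // => b; rewrite inE. Qed.

Lemma zval_le_sqrt_cross_energy C : zval f C <= Num.sqrt (cross_energy C).
Proof.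
have en_ge0 b : b \in C -> 0 <= fhat f b ^+ 2 by rewrite sqr_ge0.
have z_ge0 : 0 <= zval f C by rewrite subr_ge0 bigmax_le_sum.
rewrite -(ger0_norm z_ge0) -sqrtr_sqr ler_sqrt ?cross_energy_ge0 //.
exact: sqr_sum_sub_bigmax_le.
Qed.

Lemma sum_zval_nth_le (H : {set V}) (l : seq {set V}) (s : nat) :
  perm_eq l (enum (cosets H)) ->
  \sum_(i < s) zval f (nth set0 l i) <= Num.sqrt (s%:R * coset_cross_energy H).
Proof.
move=> l_perm.
apply: le_trans (ler_sum _ (fun i _ => zval_le_sqrt_cross_energy _)) _.
have := @sum_sqrt_le R 'I_s xpredT (fun i => cross_energy (nth set0 l i))
  (fun i _ => cross_energy_ge0 _).
rewrite card_ord => /le_trans; apply.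
rewrite ler_sqrt ?mulr_ge0 ?ler0n ?sumr_ge0 // => [|C _]; last exact: cross_energy_ge0.
rewrite ler_wpM2l // /coset_cross_energy -[X in _ <= X]big_enum -(perm_big _ l_perm).
exact: sum_nth_le_sum cross_energy0 cross_energy_ge0.
Qed.

Lemma coset_cross_energyE d (H : {set V}) : codim_subspace d H ->
  coset_cross_energy H = \sum_(b : V) \sum_(b' : V | b' != b)
    fhat f b ^+ 2 * fhat f b' ^+ 2 * (b' - b \in H)%:R.
Proof.
move=> codimH; rewrite /coset_cross_energy /cross_energy (exchange_big_dep xpredT) //=.
apply: eq_bigr => b _.
rewrite (big_pred1 (coset H b)) => [|C]; last by rewrite (cosets_mem codimH).
rewrite big_mkcondl /=; apply: eq_bigr => b' _; rewrite mem_coset.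
by case: (b' - b \in H); rewrite ?mulr1 ?mulr0.
Qed.

Lemma expect_coset_cross_energy_le d : (d <= n)%N ->
  expect_codim d coset_cross_energy <=
  (2%:R ^+ d)^-1 * (\sum_(b : V) fhat f b ^+ 2) ^+ 2.
Proof.
move=> dn; set u := (2%:R ^+ d)^-1.
have u_ge0 : 0 <= u by rewrite invr_ge0 exprn_ge0.
have en2_ge0 b b' : 0 <= fhat f b ^+ 2 * fhat f b' ^+ 2.
  exact: mulr_ge0 (sqr_ge0 _) (sqr_ge0 _).
apply: le_trans (ler_expect_codim (Y := fun H => \sum_(b : V) \sum_(b' : V | b' != b)
    fhat f b ^+ 2 * fhat f b' ^+ 2 * (b' - b \in H)%:R) _) _.
  by move=> H codimH; rewrite (coset_cross_energyE codimH).
rewrite expect_codim_sum; under eq_bigr do rewrite expect_codim_sum.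
under eq_bigr do under eq_bigr do rewrite expect_codimZ.
rewrite expr2 big_distrlr mulr_sumr /=; apply: ler_sum => b _.
rewrite mulr_sumr [X in _ <= X](bigD1 b) //= -[X in X <= _]add0r.
apply: lerD; first exact: mulr_ge0 u_ge0 (en2_ge0 _ _).
apply: ler_sum => b' b'b.
rewrite mulrC; apply: ler_wpM2r => //.
by apply: expect_codim_mem_le; rewrite // subr_eq0.
Qed.

End Buckets.

Theorem lemma3p1 (R : rcfType) (n d s : nat) (f : 'rV['F_2]_n -> R)
    (ord : {set 'rV['F_2]_n} -> seq {set 'rV['F_2]_n}) :
  (1 <= s)%N -> (d <= n)%N ->
  (forall H, codim_subspace d H ->
     perm_eq (ord H) (enum (cosets H)) /\
     sorted (fun A B => energy f B <= energy f A) (ord H)) ->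
  expect_codim d (fun H => \sum_(i < s) zval f (nth set0 (ord H) i))
  <= Num.sqrt (2 * s%:R / 2%:R ^+ d) * norm2sq f.
Proof.
move=> _ dn ord_buckets; set A := norm2sq f; set u := (2%:R ^+ d)^-1.
have A_ge0 : 0 <= A by rewrite /A -parseval sumr_ge0 // => b _; exact: sqr_ge0.
have u_ge0 : 0 <= u by rewrite invr_ge0 exprn_ge0.
have Q_ge0 H : 0 <= s%:R * coset_cross_energy f H.
  by rewrite mulr_ge0 ?ler0n ?coset_cross_energy_ge0.
apply: le_trans (ler_expect_codim (Y := fun H =>
    Num.sqrt (s%:R * coset_cross_energy f H)) _) _.
  by move=> H /ord_buckets[ord_perm _]; exact: sum_zval_nth_le.
apply: le_trans (expect_codim_sqrt_le (fun H _ => Q_ge0 H)) _.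
rewrite expect_codimZ -(ger0_norm A_ge0) -sqrtr_sqr -sqrtrM; last first.
  by rewrite mulr_ge0 ?mulr_ge0 ?ler0n.
rewrite ler_sqrt; last by rewrite mulr_ge0 ?sqr_ge0 // !mulr_ge0 ?ler0n.
rewrite [2 * _]mulrC -!mulrA ler_wpM2l ?ler0n //.
apply: le_trans (expect_coset_cross_energy_le f dn) _; rewrite parseval -/A -/u.
have : 0 <= u * A ^+ 2 by rewrite mulr_ge0 ?sqr_ge0.
lra.
Qed.
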